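(* Let $G=(V,E)$ be a control flow graph and $p\in V$ a predicate node. For each maximal path from $p$ in $G$ there exists a maximal path from $p$ in $A_p$ with the same order of the first occurrences of all nodes from $V_p$, and vice versa (for each maximal path from $p$ in $A_p$ there exists a maximal path from $p$ in $G$ with the same order of the first occurrences of all nodes from $V_p$).
   Context: A control flow graph (CFG) is a finite directed graph $G=(V,E)$ in which every node has at most two outgoing edges; nodes with exactly two outgoing edges are predicate nodes. A path from $n_1$ is a nonempty finite or infinite sequence $n_1n_2\ldots$ of nodes with each adjacent pair an edge; it is maximal if it is infinite or its last node has no successor. For a node $p$, $V_p$ is the set of nodes occurring on all maximal paths from $p$ in $G$ (so $p\in V_p$). For $V'\subseteq V$, a $V'$-interval from $x$ to $y$ is a finite path $n_1\ldots n_k$ in $G$ with $k\ge 2$, $n_1=x\in V'$, $n_k=y\in V'$, and $n_i\notin V'$ for all $1<i<k$. $A_p$ is the directed graph with node set $V_p$ and an edge $(x,y)$ iff there is a $V_p$-interval from $x$ to $y$ in $G$. Paths and maximal paths in $A_p$ are defined as in $G$. *)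

From mathcomp Require Import all_boot.
Set Implicit Arguments. Unset Strict Implicit. Unset Printing Implicit Defensive.

(* A (finite or infinite) path is represented by a function [f : nat -> V]
   together with a length [len : option nat]:
   - [len = None]   : the infinite path f 0, f 1, f 2, ...
   - [len = Some n] : the finite path f 0, ..., f (n-1) (requires n >= 1);
     values of f beyond index n-1 are irrelevant. *)

Section Paths.
Variable V : Type.
Variable R : V -> V -> Prop.

Definition in_range (len : option nat) (i : nat) : Prop :=
  match len with None => True | Some n => i < n end.

Definition is_path (f : nat -> V) (len : option nat) : Prop :=
  match len with
  | None => forall i, R (f i) (f i.+1)
  | Some n => 0 < n /\ forall i, i.+1 < n -> R (f i) (f i.+1)
  end.

Definition is_maximal_path (f : nat -> V) (len : option nat) : Prop :=
  is_path f len /\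
  match len with
  | None => True
  | Some n => forall y, ~ R (f n.-1) y
  end.

Definition maximal_path_from (x : V) (f : nat -> V) (len : option nat) : Prop :=
  is_maximal_path f len /\ f 0 = x.

End Paths.

Definition first_occ (V : Type) (f : nat -> V) (len : option nat) (x : V) (i : nat) :=
  in_range len i /\ f i = x /\ forall j, j < i -> f j <> x.

Definition same_first_occ_order (V : Type) (S : V -> Prop)
  (f : nat -> V) (lf : option nat) (g : nat -> V) (lg : option nat) : Prop :=
  (forall x, S x -> ((exists i, first_occ f lf x i) <-> (exists i, first_occ g lg x i))) /\
  (forall x y, S x -> S y ->
     ((exists i j, first_occ f lf x i /\ first_occ f lf y j /\ i < j) <->
      (exists i j, first_occ g lg x i /\ first_occ g lg y j /\ i < j))).

Section CFG.
Variable V : finType.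
Variable E : rel V.

Definition is_CFG : Prop := forall x : V, #|[set y | E x y]| <= 2.

Definition predicate_node (p : V) : Prop := #|[set y | E p y]| = 2.

Definition Vp (p : V) (x : V) : Prop :=
  forall f len, maximal_path_from (fun a b => E a b) p f len ->
    exists i, in_range len i /\ f i = x.

Definition interval (V' : V -> Prop) (x y : V) : Prop :=
  V' x /\ V' y /\
  exists (k : nat) (g : nat -> V),
    2 <= k /\ is_path (fun a b => E a b) g (Some k) /\ g 0 = x /\ g k.-1 = y /\
    (forall i, 0 < i -> i < k.-1 -> ~ V' (g i)).

(* edge relation of A_p; its node set is V_p (every edge joins V_p nodes,
   and paths from p in A_p stay inside V_p) *)
Definition Ap_edge (p : V) (x y : V) : Prop :=
  Vp p x /\ Vp p y /\ interval (Vp p) x y.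

End CFG.

(* Cut a maximal path of G from p at its visits to V_p: consecutive visits are
   joined by V_p-intervals, so the visited nodes form a path of A_p with the same
   first occurrences.  If there are only finitely many visits, prolong it by any
   maximal path of A_p; its nodes lie in V_p and so already occur on the original
   path, and no first occurrence changes.  Conversely, expand each edge of a maximal
   path of A_p into an interval, whose inner nodes avoid V_p.  If that path is
   finite, its last node starts no interval, so any maximal path of G from it never
   meets V_p again and can be appended. *)

From mathcomp Require Import all_boot zify.
From Stdlib Require Import Classical ClassicalEpsilon.

Set Implicit Arguments. Unset Strict Implicit.

Lemma ex_minimal (P : nat -> Prop) :
  (exists n, P n) -> exists n, P n /\ forall m, m < n -> ~ P m.
Proof.
move=> [n Pn]; apply: NNPP => no_min; elim/ltn_ind: n Pn => n IH Pn.
by apply: no_min; exists n; split=> // m lt_mn; apply: IH.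
Qed.

Lemma in_range_le l i j : j <= i -> in_range l i -> in_range l j.
Proof. by case: l => [n|] //= le_ji; apply: leq_ltn_trans. Qed.

Section Paths.
Variables (V : Type) (R : V -> V -> Prop).

Lemma path_step f l k : is_path R f l -> in_range l k.+1 -> R (f k) (f k.+1).
Proof. by case: l => [n [_ step]|step _] //; apply: step. Qed.

Lemma path_range0 f l : is_path R f l -> in_range l 0.
Proof. by case: l => [n []|]. Qed.

Lemma path_of_steps f l :
  in_range l 0 -> (forall k, in_range l k.+1 -> R (f k) (f k.+1)) -> is_path R f l.
Proof. by case: l => [n|] //= ? step => // i; apply: step. Qed.

Lemma exists_maximal_path_from x : exists f l, maximal_path_from R x f l.
Proof.
have [next nextP] : exists next : V -> V, forall y, (exists z, R y z) -> R y (next y).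
  apply: (ClassicalEpsilon.choice (fun y z => (exists z', R y z') -> R y z)) => y.
  by case: (classic (exists z, R y z)) => [[z yz] | none]; [exists z | exists y].
pose f n := iter n next x.
case: (classic (exists n, ~ exists z, R (f n) z)) => [stuck|never_stuck].
- have [n [dead alive]] := ex_minimal stuck.
  exists f, (Some n.+1); split=> //; split=> [|y /= fny]; last by apply: dead; exists y.
  by split=> // i lt_in; apply: nextP; apply: NNPP; apply: alive.
- exists f, None; split=> //; split=> // i; apply: nextP.
  by apply: NNPP => dead; apply: never_stuck; exists i.
Qed.

Definition path_cat (a : nat -> V) (n : nat) (b : nat -> V) i :=
  if i < n.-1 then a i else b (i - n.-1).

Definition cat_len n (lb : option nat) := omap (addn n.-1) lb.

Lemma path_cat_lt a n b i : b 0 = a n.-1 -> i < n -> path_cat a n b i = a i.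
Proof.
move=> b0 lt_in; rewrite /path_cat; case: ltnP => // ge_i.
have -> : i = n.-1 by lia.
by rewrite subnn.
Qed.

Lemma path_cat_ge a n b i : n.-1 <= i -> path_cat a n b i = b (i - n.-1).
Proof. by move=> ge_i; rewrite /path_cat ltnNge ge_i. Qed.

Lemma in_range_cat_lt n lb i : in_range lb 0 -> i < n -> in_range (cat_len n lb) i.
Proof. by case: lb => [m|] //=; lia. Qed.

Lemma in_range_cat_ge n lb i :
  n.-1 <= i -> in_range (cat_len n lb) i -> in_range lb (i - n.-1).
Proof. by case: lb => [m|] //=; lia. Qed.

Lemma maximal_path_cat a n b lb :
  is_path R a (Some n) -> is_maximal_path R b lb -> b 0 = a n.-1 ->
  is_maximal_path R (path_cat a n b) (cat_len n lb).
Proof.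
move=> a_path [b_path b_max] b0; have n_gt0 : 0 < n by case: a_path.
split.
- apply: path_of_steps => [|k k_in]; first exact: in_range_cat_lt (path_range0 b_path) _.
  case: (ltnP k n.-1) => le_kn.
  + by rewrite !path_cat_lt //; try lia; apply: (path_step a_path) => /=; lia.
  + rewrite !path_cat_ge; try lia.
    have -> : k.+1 - n.-1 = (k - n.-1).+1 by lia.
    apply: (path_step b_path); have := in_range_cat_ge _ k_in.
    have -> : k.+1 - n.-1 = (k - n.-1).+1 by lia.
    by apply; lia.
- case: lb b_path b_max => [m|] // [m_gt0 _] b_max /=.
  rewrite path_cat_ge; last lia.
  by have -> : (n.-1 + m).-1 - n.-1 = m.-1 by lia.
Qed.

End Paths.

Section FirstOccurrences.
Variables (V : Type) (S : V -> Prop).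

Lemma first_occ_exists (f : nat -> V) l i : in_range l i -> exists j, first_occ f l (f i) j.
Proof.
move=> i_in.
have [j [[j_in fj] j_min]] :=
  ex_minimal (ex_intro (fun j => in_range l j /\ f j = f i) i (conj i_in erefl)).
exists j; do 2 split=> //; move=> k lt_kj fk; apply: (j_min k lt_kj); split=> //.
exact: in_range_le (ltnW lt_kj) j_in.
Qed.

Lemma first_occ_uniq (f : nat -> V) l x i i' : first_occ f l x i -> first_occ f l x i' -> i = i'.
Proof.
move=> [_ [fi i_min]] [_ [fi' i'_min]].
by case: (ltngtP i i') => // [/i'_min | /i_min]; [rewrite fi | rewrite fi'].
Qed.

Lemma same_first_occ_order_sym f lf g lg :
  same_first_occ_order S f lf g lg -> same_first_occ_order S g lg f lf.
Proof. by move=> [occ ord]; split=> [x Sx | x y Sx Sy]; apply: iff_sym; auto. Qed.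

Lemma same_first_occ_order_trans f lf g lg h lh :
  same_first_occ_order S f lf g lg -> same_first_occ_order S g lg h lh ->
  same_first_occ_order S f lf h lh.
Proof.
move=> [occ1 ord1] [occ2 ord2].
by split=> [x Sx | x y Sx Sy]; apply: iff_trans; [apply: occ1 | | apply: ord1 | ]; auto.
Qed.

Lemma same_first_occ_order_embed f lf g lg (h : nat -> nat) :
  (forall k, in_range lg k -> in_range lf (h k) /\ f (h k) = g k) ->
  (forall k k', in_range lg k' -> k < k' -> h k < h k') ->
  (forall i, in_range lf i -> S (f i) -> exists k, [/\ in_range lg k, g k = f i & h k <= i]) ->
  same_first_occ_order S g lg f lf.
Proof.
move=> h_embed h_mono f_covered.
have h_le k k' : in_range lg k' -> k <= k' -> h k <= h k'.
  by move=> k'_in; rewrite leq_eqVlt => /predU1P [-> | /(h_mono _ _ k'_in)/ltnW].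
have first_g_to_f x k : S x -> first_occ g lg x k -> first_occ f lf x (h k).
  move=> Sx [k_in [gk k_min]]; have [hk_in fhk] := h_embed k k_in.
  split=> //; split=> [|j lt_j fj]; first by rewrite fhk.
  have := f_covered j (in_range_le (ltnW lt_j) hk_in); rewrite fj => /(_ Sx) [k' [k'_in gk' le_j]].
  case: (ltnP k' k) => [/k_min | le_kk']; first by rewrite gk'.
  by have := h_le _ _ k'_in le_kk'; lia.
have first_f_to_g x i : S x -> first_occ f lf x i -> exists k, first_occ g lg x k.
  move=> Sx [i_in [fi _]]; have := f_covered i i_in; rewrite fi => /(_ Sx) [k [k_in gk _]].
  by rewrite -gk; apply: first_occ_exists.
split=> [x Sx | x y Sx Sy]; split.
- by move=> [k occ]; exists (h k); apply: first_g_to_f.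
- by move=> [i occ]; apply: first_f_to_g occ.
- move=> [k [k' [occx [occy lt_kk']]]]; exists (h k), (h k').
  by split; [|split]; [apply: first_g_to_f | apply: first_g_to_f | apply: h_mono (proj1 occy) _].
- move=> [i [j [occx [occy lt_ij]]]].
  have [k occx'] := first_f_to_g _ _ Sx occx; have [k' occy'] := first_f_to_g _ _ Sy occy.
  rewrite -(first_occ_uniq (first_g_to_f _ _ Sx occx') occx) in lt_ij.
  rewrite -(first_occ_uniq (first_g_to_f _ _ Sy occy') occy) in lt_ij.
  exists k, k'; split=> //; split=> //; case: (ltnP k k') => // le_k'k.
  by have := h_le _ _ (proj1 occx') le_k'k; lia.
Qed.

End FirstOccurrences.

Section Blocks.
Variable K : nat -> nat.
Hypothesis K_gt1 : forall k, 1 < K k.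

(* Segment k has K k nodes and its last node is the first node of segment k.+1,
   so in the concatenation it occupies the (K k).-1 positions from block_start k
   on; locate n = (k, j) when position n holds node j of segment k. *)
Fixpoint block_start k := if k is k'.+1 then block_start k' + (K k').-1 else 0.

Fixpoint locate n : nat * nat :=
  if n is n'.+1 then
    let: (k, j) := locate n' in if j.+2 < K k then (k, j.+1) else (k.+1, 0)
  else (0, 0).

Lemma locate_spec n :
  n = block_start (locate n).1 + (locate n).2 /\ (locate n).2 < (K (locate n).1).-1.
Proof.
elim: n => [|n]; first by have := K_gt1 0; rewrite /=; lia.
rewrite /=; case: (locate n) => k j /= [-> lt_j].
by case: ifP => /= [|/negbT]; [lia | have := K_gt1 k.+1; lia].
Qed.

Lemma ltn_block_start k k' : (block_start k < block_start k') = (k < k').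
Proof.
have mono : forall k k', k < k' -> block_start k < block_start k'.
  move=> {}k {}k'; elim: k' => // k' IH; rewrite ltnS leq_eqVlt /= => /predU1P [->|/IH];
  by have := K_gt1 k'; lia.
by apply/idP/idP => [|/mono //]; case: (ltngtP k k') => // [/mono | ->]; lia.
Qed.

Lemma leq_block_start k k' : (block_start k <= block_start k') = (k <= k').
Proof. by rewrite leqNgt ltn_block_start -leqNgt. Qed.

Lemma locate_block_start k : locate (block_start k) = (k, 0).
Proof.
have [eq_n lt_j] := locate_spec (block_start k).
case: (locate _) eq_n lt_j => [k' j] /= eq_n lt_j.
have le : k' <= k by rewrite -leq_block_start eq_n leq_addr.
have [lt_k'k | eq_k'k] : k' < k \/ k' = k by lia.
- by have := leq_block_start k'.+1 k; rewrite lt_k'k /=; lia.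
- by subst k'; congr pair; lia.
Qed.

Lemma locate_lt n k : n < block_start k -> (locate n).1 < k.
Proof.
move=> lt_n; have [eq_n _] := locate_spec n.
by rewrite ltnNge -leq_block_start; apply/negP; lia.
Qed.

End Blocks.

Section Intervals.
Variables (V : finType) (E : rel V) (S : V -> Prop).

Definition interval_edge x y := S x /\ S y /\ interval E S x y.

Lemma interval_of_segment f l i j :
  is_path (fun a b => E a b) f l -> i < j -> in_range l j -> S (f i) -> S (f j) ->
  (forall t, i < t -> t < j -> ~ S (f t)) -> interval E S (f i) (f j).
Proof.
move=> f_path lt_ij j_in Sfi Sfj avoid; split=> //; split=> //.
exists (j - i).+1, (fun t => f (i + t)); split; first lia.
split.
  apply: path_of_steps => //= t lt_t; rewrite addnS; apply: (path_step f_path).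
  by apply: in_range_le j_in; lia.
split; first by rewrite addn0.
split; first by rewrite /= subnKC // ltnW.
by move=> t t_gt0 lt_t; apply: avoid; rewrite /= in lt_t; lia.
Qed.

Lemma path_from_dead_end_avoids x b lb :
  S x -> (forall y, ~ interval_edge x y) -> is_path (fun a b => E a b) b lb -> b 0 = x ->
  forall t, 0 < t -> in_range lb t -> ~ S (b t).
Proof.
move=> Sx dead b_path b0 t t_gt0 t_in Sbt.
have [u [[u_gt0 [u_in Sbu]] u_min]] := ex_minimal
  (ex_intro (fun u => 0 < u /\ in_range lb u /\ S (b u)) t (conj t_gt0 (conj t_in Sbt))).
apply: (dead (b u)); split=> //; split=> //; rewrite -b0.
apply: (interval_of_segment b_path) => // [|v v_gt0 lt_vu Sbv]; first by rewrite b0.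
by apply: (u_min v lt_vu); split=> //; split=> //; apply: in_range_le (ltnW lt_vu) u_in.
Qed.

Lemma interval_edge_path_in g l :
  S (g 0) -> is_path interval_edge g l -> forall k, in_range l k -> S (g k).
Proof. by move=> Sg0 g_path [|k] k_in //; case: (path_step g_path k_in) => _ []. Qed.

Variable p : V.
Hypothesis S_p : S p.

Section Compression.

Section Positions.
Variables (f : nat -> V) (lf : option nat).
Hypothesis f_path : is_path (fun a b => E a b) f lf.
Hypothesis f0 : f 0 = p.

Definition next_S_position i j :=
  [/\ in_range lf j, i < j, S (f j) & forall t, i < t -> t < j -> ~ S (f t)].

Variables (h : nat -> nat) (lh : option nat).
Hypothesis h_max : maximal_path_from next_S_position 0 h lh.

Lemma S_positions_in_range k : in_range lh k -> in_range lf (h k) /\ S (f (h k)).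
Proof.
case: h_max => [[h_path _] h0]; case: k => [|k] k_in.
  by rewrite h0 f0; split=> //; apply: path_range0 f_path.
by case: (path_step h_path k_in).
Qed.

Lemma S_positions_increasing k k' : in_range lh k' -> k < k' -> h k < h k'.
Proof.
case: h_max => [[h_path _] _]; elim: k' => // k' IH k'1_in.
have [_ lt_step _ _] := path_step h_path k'1_in.
rewrite ltnS leq_eqVlt => /predU1P [-> // | lt_kk'].
by apply: ltn_trans lt_step; apply: IH lt_kk'; apply: in_range_le k'1_in.
Qed.

Lemma S_positions_exhaustive i :
  in_range lf i -> S (f i) -> exists k, in_range lh k /\ h k = i.
Proof.
move=> i_in Sfi; case: h_max => [[h_path h_end] h0].
suff reach d k : in_range lh k -> h k <= i -> i - h k <= d ->
    exists k, in_range lh k /\ h k = i.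
  by apply: (reach i 0 (path_range0 h_path)); rewrite h0 ?subn0.
elim: d k => [|d IH] k k_in le_hk_i dist; first by exists k; split=> //; lia.
case: (eqVneq (h k) i) => [<- | ne]; first by exists k.
have lt_hk_i : h k < i by lia.
case: (classic (in_range lh k.+1)) => [k1_in | k_last].
  have [_ lt_step _ avoid] := path_step h_path k1_in.
  have le_i : h k.+1 <= i by rewrite leqNgt; apply/negP => /(avoid i lt_hk_i); apply.
  by apply: (IH k.+1) => //; lia.
destruct lh as [m|]; last by exfalso; apply: k_last.
have [t [[lt_t [t_in Sft]] t_min]] := ex_minimal
  (ex_intro (fun t => h k < t /\ in_range lf t /\ S (f t)) i (conj lt_hk_i (conj i_in Sfi))).
have k_eq : m.-1 = k by rewrite /= in k_in k_last; lia.
case: (h_end t); rewrite k_eq; split=> // u lt_u lt_ut Sfu.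
by apply: (t_min u lt_ut); split=> //; split=> //; apply: in_range_le (ltnW lt_ut) t_in.
Qed.

Lemma S_positions_path : is_path interval_edge (fun k => f (h k)) lh.
Proof.
case: h_max => [[h_path _] _]; apply: path_of_steps => [|k k1_in].
  exact: path_range0 h_path.
have [_ Sk] := S_positions_in_range (in_range_le (leqnSn k) k1_in).
have [hk1_in lt_step Sk1 avoid] := path_step h_path k1_in.
by split=> //; split=> //; apply: (interval_of_segment f_path).
Qed.

End Positions.

Hypothesis S_unavoidable : forall x, S x -> Vp E p x.

Lemma compress_maximal_path f lf :
  maximal_path_from (fun a b => E a b) p f lf ->
  exists g lg, maximal_path_from interval_edge p g lg /\ same_first_occ_order S f lf g lg.
Proof.
move=> f_max; have [[f_path _] f0] := f_max.
have [h [lh h_max]] := exists_maximal_path_from (next_S_position f lf) 0.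
pose g k := f (h k).
have g_path : is_path interval_edge g lh := S_positions_path f_path f0 h_max.
have g0 : g 0 = p by rewrite /g h_max.2.
have f_covered i : in_range lf i -> S (f i) ->
    exists k, [/\ in_range lh k, g k = f i & h k <= i].
  by move=> i_in /(S_positions_exhaustive h_max i_in) [k [k_in <-]]; exists k.
have f_g : same_first_occ_order S f lf g lh.
  apply/same_first_occ_order_sym/(same_first_occ_order_embed (h := h)) => //.
  - by move=> k k_in; split=> //; case: (S_positions_in_range f_path f0 h_max k_in).
  - exact: S_positions_increasing h_max.
destruct lh as [m|]; last by exists g, None.
have [b [lb [b_max b0]]] := exists_maximal_path_from interval_edge (g m.-1).
have m_gt0 : 0 < m by case: g_path.
exists (path_cat g m b), (cat_len m lb); split.
  by split; [apply: maximal_path_cat | rewrite path_cat_lt].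
apply: (same_first_occ_order_trans f_g).
apply: (same_first_occ_order_embed (h := id)) => // [k /= lt_km | i i_in S_i].
  split; first exact: in_range_cat_lt (path_range0 b_max.1) lt_km.
  exact: path_cat_lt.
case: (ltnP i m) => [lt_im | le_mi]; first by exists i; rewrite path_cat_lt.
have [t [t_in ft]] := S_unavoidable S_i f_max.
have := f_covered t t_in; rewrite ft => /(_ S_i) [k [lt_km gk _]].
by exists k; split=> //; rewrite /= in lt_km; lia.
Qed.

End Compression.

Section Expansion.
Variables (g : nat -> V) (lg : option nat).
Hypothesis g_max : maximal_path_from interval_edge p g lg.

Lemma exists_interval_segments :
  exists (K : nat -> nat) (w : nat -> nat -> V),
    [/\ forall k, 1 < K k, forall k, w k 0 = g k &
        forall k, in_range lg k.+1 ->
          [/\ is_path (fun a b => E a b) (w k) (Some (K k)), w k (K k).-1 = g k.+1 &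
              forall i, 0 < i -> i < (K k).-1 -> ~ S (w k i)]].
Proof.
have [[g_path _] _] := g_max.
have /ClassicalEpsilon.choice [Kw Kw_spec] : forall k, exists Kw : nat * (nat -> V),
  [/\ 1 < Kw.1, Kw.2 0 = g k & in_range lg k.+1 ->
      [/\ is_path (fun a b => E a b) Kw.2 (Some Kw.1), Kw.2 (Kw.1).-1 = g k.+1 &
          forall i, 0 < i -> i < (Kw.1).-1 -> ~ S (Kw.2 i)]].
  move=> k; case: (classic (in_range lg k.+1)) => [k1_in | k_last].
    have [_ [_ [_ [_ [K [w [K_ge2 [w_path [w0 [w_end w_avoid]]]]]]]]]] := path_step g_path k1_in.
    by exists (K, w); split.
  by exists (2, fun _ => g k); split.
by exists (fun k => (Kw k).1), (fun k => (Kw k).2); split=> k; case: (Kw_spec k).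
Qed.

Section Segments.
Variables (K : nat -> nat) (w : nat -> nat -> V).
Hypothesis K_gt1 : forall k, 1 < K k.
Hypothesis w0 : forall k, w k 0 = g k.
Hypothesis w_interval : forall k, in_range lg k.+1 ->
  [/\ is_path (fun a b => E a b) (w k) (Some (K k)), w k (K k).-1 = g k.+1 &
      forall i, 0 < i -> i < (K k).-1 -> ~ S (w k i)].

Definition expansion n := w (locate K n).1 (locate K n).2.

Lemma expansion_block_start k : expansion (block_start K k) = g k.
Proof. by rewrite /expansion locate_block_start. Qed.

Lemma expansion_step n : in_range lg (locate K n).1.+1 -> E (expansion n) (expansion n.+1).
Proof.
rewrite /expansion /=; have [_ lt_j] := locate_spec K_gt1 n.
case: (locate K n) lt_j => k j /= lt_j k1_in.
have [w_path w_end _] := w_interval k1_in.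
case: ifP => /= [lt_j2 | /negbT]; first by apply: (path_step w_path) => /=; lia.
rewrite -leqNgt w0 -w_end => ge_j2; have -> : (K k).-1 = j.+1 by lia.
by apply: (path_step w_path) => /=; lia.
Qed.

Lemma expansion_S_at_block_start n :
  in_range lg (locate K n).1.+1 -> S (expansion n) -> n = block_start K (locate K n).1.
Proof.
rewrite /expansion; have [eq_n lt_j] := locate_spec K_gt1 n.
case: (locate K n) eq_n lt_j => k j /= -> lt_j k1_in.
case: (posnP j) => [-> _ | j_gt0]; first by rewrite addn0.
by have [_ _ /(_ j j_gt0 lt_j)] := w_interval k1_in.
Qed.

End Segments.

End Expansion.

Lemma expand_infinite g :
  maximal_path_from interval_edge p g None ->
  exists f lf, maximal_path_from (fun a b => E a b) p f lf /\ same_first_occ_order S g None f lf.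
Proof.
move=> g_max; have [K [w [K_gt1 w0 w_interval]]] := exists_interval_segments g_max.
have e_block := expansion_block_start K_gt1 w0.
exists (expansion K w), None; split.
  split; last by rewrite -g_max.2 -e_block.
  by split=> // n; apply: (expansion_step K_gt1 w0 w_interval).
apply: (same_first_occ_order_embed (h := block_start K)) => // [k k' _ | i _ S_i].
  by rewrite (ltn_block_start K_gt1).
have i_eq := expansion_S_at_block_start K_gt1 w_interval (n := i) I S_i.
by exists (locate K i).1; split=> //; rewrite -?e_block -i_eq.
Qed.

Lemma expand_finite g m :
  maximal_path_from interval_edge p g (Some m) ->
  exists f lf,
    maximal_path_from (fun a b => E a b) p f lf /\ same_first_occ_order S g (Some m) f lf.
Proof.
move=> g_max; have [[g_path g_end] g0] := g_max.
have [K [w [K_gt1 w0 w_interval]]] := exists_interval_segments g_max.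
pose e := expansion K w.
have e_block : forall k, e (block_start K k) = g k := expansion_block_start K_gt1 w0.
have m_gt0 : 0 < m by case: g_path.
pose N := (block_start K m.-1).+1.
have e_path : is_path (fun a b => E a b) e (Some N).
  apply: path_of_steps => // n /=; rewrite ltnS => /(locate_lt K_gt1) lt_n.
  by apply: (expansion_step K_gt1 w0 w_interval) => /=; lia.
have S_g_last : S (g m.-1) by apply: (interval_edge_path_in _ g_path) => /=; [rewrite g0 | lia].
have [b [lb [[b_path b_max] b0]]] := exists_maximal_path_from (fun a b => E a b) (g m.-1).
have b0' : b 0 = e N.-1 by rewrite b0 e_block.
exists (path_cat e N b), (cat_len N lb); split.
  by split; [apply: maximal_path_cat | rewrite path_cat_lt // -g0 -e_block].
apply: (same_first_occ_order_embed (h := block_start K)) => [k /= lt_km | k k' _ | i i_in S_i].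
- have lt_kN : block_start K k < N by rewrite /N ltnS (leq_block_start K_gt1); lia.
  split; first exact: in_range_cat_lt (path_range0 b_path) lt_kN.
  by rewrite path_cat_lt.
- by rewrite (ltn_block_start K_gt1).
case: (ltnP i N) => [lt_iN | le_Ni].
  rewrite path_cat_lt // in S_i *.
  case: (ltngtP i (block_start K m.-1)) => [lt_i | | ->]; last 2 first.
  - by rewrite /N in lt_iN; lia.
  - by exists m.-1; split=> //=; lia.
  have lt_k := locate_lt K_gt1 lt_i.
  have i_eq : i = block_start K (locate K i).1.
    by apply: (expansion_S_at_block_start K_gt1 w_interval _ S_i) => /=; lia.
  by exists (locate K i).1; split=> /=; [lia | rewrite -e_block -i_eq | rewrite -i_eq].
have lt_i : N.-1 < i := le_Ni.
rewrite (path_cat_ge _ _ (ltnW lt_i)) in S_i.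
case: (path_from_dead_end_avoids S_g_last g_end b_path b0 _ _ S_i); first by rewrite subn_gt0.
exact: in_range_cat_ge (ltnW lt_i) i_in.
Qed.

End Intervals.

Lemma Vp_refl (V : finType) (E : rel V) (p : V) : Vp E p p.
Proof. by move=> f l [[f_path _] f0]; exists 0; split=> //; apply: path_range0 f_path. Qed.

Theorem lemma4p4 (V : finType) (E : rel V) (p : V) :
  is_CFG E -> predicate_node E p ->
  (forall (f : nat -> V) (lf : option nat),
     maximal_path_from (fun a b => E a b) p f lf ->
     exists (g : nat -> V) (lg : option nat),
       maximal_path_from (Ap_edge E p) p g lg /\
       same_first_occ_order (Vp E p) f lf g lg) /\
  (forall (g : nat -> V) (lg : option nat),
     maximal_path_from (Ap_edge E p) p g lg ->
     exists (f : nat -> V) (lf : option nat),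
       maximal_path_from (fun a b => E a b) p f lf /\
       same_first_occ_order (Vp E p) g lg f lf).
Proof.
move=> _ _; split=> [f lf | g lg].
- exact: (compress_maximal_path (S := Vp E p) (@Vp_refl _ E p) (fun _ Vpx => Vpx)).
- by case: lg => [m|]; [apply: expand_finite | apply: expand_infinite]; apply: Vp_refl.
Qed.
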